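(* The class $\mathbb{ML}^{\Box}$, regarded as a class of algebras $(L;\wedge,\vee,\neg,\Box)$, is an equational class (a variety). Concretely, an algebra $(L;\wedge,\vee,\neg,\Box)$ belongs to $\mathbb{ML}^{\Box}$ if and only if it satisfies the lattice identities, the identities $x\wedge\neg x\preccurlyeq y$, $y\preccurlyeq\neg(x\wedge\neg x)$, $x\wedge\neg(x\wedge y)\preccurlyeq\neg y$, and the identities $x\vee\neg\Box x\approx 1$, $\Box 1\approx 1$, and $\Box(x\vee\neg y)\wedge y\approx\Box x\wedge y$, where $1$ abbreviates $\neg(x\wedge\neg x)$ and $s\preccurlyeq t$ abbreviates $s\wedge t\approx s$.
   Context: A meet-complemented lattice is a lattice $(L,\le)$ (not necessarily distributive) such that for every $a\in L$ the element $\neg a=\max\{b\in L: a\wedge b\le c\ \text{for all } c\in L\}$ exists; such a lattice is bounded, with bottom $0$ and top $1=\neg(a\wedge\neg a)$. For $a\in L$, the necessity of $a$ is $\Box a=\max\{b\in L: a\vee\neg b=1\}$, when it exists. $\mathbb{ML}^{\Box}$ is the class of meet-complemented lattices in which $\Box a$ exists for every $a$, considered as algebras with operations $\wedge,\vee,\neg,\Box$. *)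

Section Alg.
Variables (L : Type) (meet join : L -> L -> L) (neg box : L -> L).

Definition lattice_identities : Prop :=
  (forall x y, meet x y = meet y x) /\
  (forall x y, join x y = join y x) /\
  (forall x y z, meet x (meet y z) = meet (meet x y) z) /\
  (forall x y z, join x (join y z) = join (join x y) z) /\
  (forall x y, meet x (join x y) = x) /\
  (forall x y, join x (meet x y) = x).

(* the lattice order: a <= b iff a /\ b = a  (also the meaning of s ≼ t) *)
Definition leL (a b : L) : Prop := meet a b = a.

Definition is_max (P : L -> Prop) (m : L) : Prop :=
  P m /\ forall b, P b -> leL b m.

Definition is_top (t : L) : Prop := forall c, leL c t.

Definition is_pseudocomplement (a na : L) : Prop :=
  is_max (fun b => forall c, leL (meet a b) c) na.

Definition is_necessity (a ba : L) : Prop :=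
  is_max (fun b => is_top (join a (neg b))) ba.

Definition in_MLbox : Prop :=
  lattice_identities /\
  (forall a, is_pseudocomplement a (neg a)) /\
  (forall a, is_necessity a (box a)).

Definition one (x : L) : L := neg (meet x (neg x)).

Definition MLbox_identities : Prop :=
  lattice_identities /\
  (forall x y, leL (meet x (neg x)) y) /\
  (forall x y, leL y (neg (meet x (neg x)))) /\
  (forall x y, leL (meet x (neg (meet x y))) (neg y)) /\
  (forall x, join x (neg (box x)) = one x) /\
  (forall x, box (one x) = one x) /\
  (forall x y, meet (box (join x (neg y))) y = meet (box x) y).

End Alg.

(* In a meet-complemented lattice the bottom [x /\ neg x] and the top [one x] are
   given by terms, which turns the conditions defining [neg a] and [box a] into
   equations.  So "[a /\ b] is below everything" becomes the equation
   [b /\ a = a /\ neg a], and then [x /\ neg (x /\ y) <= neg y] with [x := b],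
   [y := a] gives [b <= neg a]; likewise "[a \/ neg b = 1]" becomes
   [a \/ neg b = one a], and [box (x \/ neg y) /\ y = box x /\ y] together with
   [box 1 = 1] gives [b <= box a]. *)

From Stdlib Require Import Setoid.

Section Lattice.
Context {L : Type} {meet join : L -> L -> L}.
Hypothesis HL : lattice_identities L meet join.

Local Notation "x ≤ y" := (leL L meet x y) (at level 70).
Local Notation is_top := (is_top L meet).

Lemma meetC x y : meet x y = meet y x. Proof. apply HL. Qed.
Lemma joinC x y : join x y = join y x. Proof. apply HL. Qed.
Lemma meetA x y z : meet x (meet y z) = meet (meet x y) z. Proof. apply HL. Qed.
Lemma joinA x y z : join x (join y z) = join (join x y) z. Proof. apply HL. Qed.
Lemma meetKU x y : meet x (join x y) = x. Proof. apply HL. Qed.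
Lemma joinKI x y : join x (meet x y) = x. Proof. apply HL. Qed.

Lemma meetxx x : meet x x = x.
Proof. rewrite <- (joinKI x x) at 2. apply meetKU. Qed.

Lemma joinxx x : join x x = x.
Proof. rewrite <- (meetKU x x) at 2. apply joinKI. Qed.

Lemma leEjoin a b : a ≤ b <-> join a b = b.
Proof.
unfold leL; split; intro H.
- rewrite <- H, joinC, meetC. apply joinKI.
- rewrite <- H. apply meetKU.
Qed.

Lemma le_anti a b : a ≤ b -> b ≤ a -> a = b.
Proof. unfold leL; intros Hab Hba. rewrite <- Hab, meetC. exact Hba. Qed.

Lemma le_trans a b c : a ≤ b -> b ≤ c -> a ≤ c.
Proof. unfold leL; intros Hab Hbc. rewrite <- Hab, <- meetA, Hbc. reflexivity. Qed.

Lemma leIl a b : meet a b ≤ a.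
Proof. unfold leL. rewrite meetC, meetA, meetxx. reflexivity. Qed.

Lemma leIr a b : meet b a ≤ a.
Proof. rewrite meetC. apply leIl. Qed.

Lemma meet_greatest a b c : c ≤ a -> c ≤ b -> c ≤ meet a b.
Proof. unfold leL; intros Ha Hb. rewrite meetA, Ha, Hb. reflexivity. Qed.

Lemma leUl a b : a ≤ join a b.
Proof. apply leEjoin. rewrite joinA, joinxx. reflexivity. Qed.

Lemma leUr a b : a ≤ join b a.
Proof. rewrite joinC. apply leUl. Qed.

Lemma join_least a b c : a ≤ c -> b ≤ c -> join a b ≤ c.
Proof. rewrite !leEjoin; intros Ha Hb. rewrite <- joinA, Hb, Ha. reflexivity. Qed.

Lemma top_le s t : is_top s -> s ≤ t -> is_top t.
Proof. intros Hs Hst c. exact (le_trans _ _ _ (Hs c) Hst). Qed.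

Lemma top_unique s t : is_top s -> is_top t -> s = t.
Proof. intros Hs Ht. apply le_anti; [apply Ht | apply Hs]. Qed.

Section MeetComplemented.
Context {neg : L -> L}.
Hypothesis Hneg : forall a, is_pseudocomplement L meet a (neg a).

Local Notation one := (one L meet neg).

Lemma meet_neg_le a c : meet a (neg a) ≤ c.
Proof. apply (Hneg a). Qed.

Lemma le_neg a b : (forall c, meet a b ≤ c) -> b ≤ neg a.
Proof. apply (Hneg a). Qed.

Lemma le_one x y : y ≤ one x.
Proof.
apply le_neg; intro c.
apply (le_trans _ (meet x (neg x))); [apply leIl | apply meet_neg_le].
Qed.

Lemma top_eq_one x t : is_top t -> t = one x.
Proof. intro Ht. apply top_unique; [exact Ht | intro y; apply le_one]. Qed.

Lemma neg_antitone a b : a ≤ b -> neg b ≤ neg a.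
Proof.
intro Hab. apply le_neg; intro c.
apply (le_trans _ (meet b (neg b))); [| apply meet_neg_le].
apply meet_greatest; [exact (le_trans _ _ _ (leIl _ _) Hab) | apply leIr].
Qed.

Lemma meet_neg_meet_le x y : meet x (neg (meet x y)) ≤ neg y.
Proof.
apply le_neg; intro c.
apply (le_trans _ (meet (meet x y) (neg (meet x y)))); [| apply meet_neg_le].
apply meet_greatest.
- apply meet_greatest; [| apply leIl].
  exact (le_trans _ _ _ (leIr _ _) (leIl _ _)).
- exact (le_trans _ _ _ (leIr _ _) (leIr _ _)).
Qed.

Section Necessity.
Context {box : L -> L}.
Hypothesis Hbox : forall a, is_necessity L meet join neg a (box a).

Lemma join_neg_box_top a : is_top (join a (neg (box a))).
Proof. apply (Hbox a). Qed.

Lemma le_box a b : is_top (join a (neg b)) -> b ≤ box a.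
Proof. apply (Hbox a). Qed.

Lemma box_monotone a b : a ≤ b -> box a ≤ box b.
Proof.
intro Hab. apply le_box, (top_le _ _ (join_neg_box_top a)).
apply join_least; [exact (le_trans _ _ _ Hab (leUl _ _)) | apply leUr].
Qed.

Lemma join_neg_box x : join x (neg (box x)) = one x.
Proof. apply top_eq_one, join_neg_box_top. Qed.

Lemma box_one x : box (one x) = one x.
Proof.
apply le_anti; [apply le_one |].
apply le_box. intro c.
apply (le_trans _ (one x)); [apply le_one | apply leUl].
Qed.

Lemma box_join_neg_meet x y :
  meet (box (join x (neg y))) y = meet (box x) y.
Proof.
apply le_anti; (apply meet_greatest; [| apply leIr]).
- (* both [neg y] and [neg (box (x \/ neg y))] lie below [neg (box (x \/ neg y) /\ y)] *)
  apply le_box, (top_le _ _ (join_neg_box_top (join x (neg y)))).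
  apply join_least; [apply join_least |].
  + apply leUl.
  + exact (le_trans _ _ _ (neg_antitone _ _ (leIr _ _)) (leUr _ _)).
  + exact (le_trans _ _ _ (neg_antitone _ _ (leIl _ _)) (leUr _ _)).
- exact (le_trans _ _ _ (leIl _ _) (box_monotone _ _ (leUl _ _))).
Qed.

End Necessity.
End MeetComplemented.

Section FromIdentities.
Context {neg box : L -> L}.

Local Notation one := (one L meet neg).

Hypothesis meet_neg_le : forall x y, meet x (neg x) ≤ y.
Hypothesis le_one : forall x y, y ≤ one x.

Lemma pseudocomplement_of_identities :
  (forall x y, meet x (neg (meet x y)) ≤ neg y) ->
  forall a, is_pseudocomplement L meet a (neg a).
Proof.
intros meet_neg_meet_le a. split; [exact (meet_neg_le a) |].
intros b Hb.
assert (Hba : meet b a = meet a (neg a)).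
{ apply le_anti; [rewrite meetC; apply Hb | apply meet_neg_le]. }
assert (Hb1 : meet b (one a) = b) by apply le_one.
pose proof (meet_neg_meet_le b a) as H.
rewrite Hba in H. fold (one a) in H. rewrite Hb1 in H. exact H.
Qed.

Lemma necessity_of_identities :
  (forall x, join x (neg (box x)) = one x) ->
  (forall x, box (one x) = one x) ->
  (forall x y, meet (box (join x (neg y))) y = meet (box x) y) ->
  forall a, is_necessity L meet join neg a (box a).
Proof.
intros join_neg_box box_one box_join_neg_meet a. split.
- intro c. rewrite join_neg_box. apply le_one.
- intros b Hb.
  assert (Ha1 : join a (neg b) = one a) by (apply le_anti; [apply le_one | apply Hb]).
  assert (H1b : meet (one a) b = b) by (rewrite meetC; apply le_one).
  pose proof (box_join_neg_meet a b) as H.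
  rewrite Ha1, box_one, H1b in H.
  unfold leL. rewrite meetC. symmetry. exact H.
Qed.

End FromIdentities.
End Lattice.

Section Variety.
Variables (L : Type) (meet join : L -> L -> L) (neg box : L -> L).

Lemma MLbox_identities_of_in_MLbox :
  in_MLbox L meet join neg box -> MLbox_identities L meet join neg box.
Proof.
intros [HL [Hneg Hbox]].
repeat split; try apply HL.
- exact (meet_neg_le Hneg).
- exact (le_one HL Hneg).
- exact (meet_neg_meet_le HL Hneg).
- exact (join_neg_box HL Hneg Hbox).
- exact (box_one HL Hneg Hbox).
- exact (box_join_neg_meet HL Hneg Hbox).
Qed.

Lemma in_MLbox_of_MLbox_identities :
  MLbox_identities L meet join neg box -> in_MLbox L meet join neg box.
Proof.
intros [HL [Hbot [Htop [Hnn [Hjb [Hb1 Hbj]]]]]].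
split; [exact HL | split].
- exact (pseudocomplement_of_identities HL Hbot Htop Hnn).
- exact (necessity_of_identities HL Htop Hjb Hb1 Hbj).
Qed.

End Variety.

Theorem mainTheorem1 (L : Type) (meet join : L -> L -> L) (neg box : L -> L) :
  in_MLbox L meet join neg box <-> MLbox_identities L meet join neg box.
Proof.
split; [apply MLbox_identities_of_in_MLbox | apply in_MLbox_of_MLbox_identities].
Qed.
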